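(* Let $(f_k(t))_{k=0,\ldots,n}$, $t\in[0,1]$, be a constant speed path with speed $v\neq 0$ and coefficients $\boldsymbol\alpha\in\mathcal A$, with $f_k(t)>0$ for all $k,t$, $f_k$ twice continuously differentiable and $\alpha_k$ continuously differentiable in $t$. Let $t^*\in(0,1)$ and suppose that at $t=t^*$: (1) $\alpha_k\le\alpha_{k+1}$ for all $k=0,\ldots,n-1$; (3) $\alpha_{k+1}(1-\alpha_{k+1})f_{k+1}^2-\alpha_{k+2}(1-\alpha_k)f_kf_{k+2}\ge0$ for all $k=0,\ldots,n-2$; (4) for all $k=0,\ldots,n-2$ we have $f_{k+1}^2-f_kf_{k+2}>0$ and $h_k\le\widetilde h_k$, where $$\widetilde h_k:=\frac{2g_kg_{k+1}f_{k+1}-g_k^2f_{k+2}-g_{k+1}^2f_k}{f_{k+1}^2-f_kf_{k+2}}$$ and $$h_k:=(1-\alpha_k)(1-\alpha_{k+1})f_k+2\alpha_{k+1}(1-\alpha_{k+1})f_{k+1}+\alpha_{k+1}\alpha_{k+2}f_{k+2}-\frac1v f_{k+1}\frac{\partial\alpha_{k+1}}{\partial t}$$ (all evaluated at $t^*$). Then the entropy $H(t)=-\sum_{k=0}^nf_k(t)\log f_k(t)$ satisfies $H''(t^* )\le0$.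
   Context: Fix an integer $n\ge1$. For a sequence $(a_k)_{k\in\mathbb Z}$ write $\nabla_1 a_k=a_k-a_{k-1}$. Functions indexed by $k$ are extended by $0$ outside their stated index range. $\mathcal A$ denotes the set of measurable $\boldsymbol\alpha(t)=(\alpha_0(t),\ldots,\alpha_n(t))$, $t\in[0,1]$, with $\alpha_0\equiv0$, $\alpha_n\equiv1$ and $0\le\alpha_k(t)\le1$ for all $k,t$. A family $(f_k(t))_{k=0,\ldots,n}$ of probability mass functions on $\{0,\ldots,n\}$ is a constant speed path with speed $v\in\mathbb R$ and coefficients $\boldsymbol\alpha\in\mathcal A$ if $\frac{\partial f_k}{\partial t}(t)=-v\,\nabla_1 g_k(t)$ for $k=0,\ldots,n$, where $g_k(t)=\alpha_{k+1}(t)f_{k+1}(t)+(1-\alpha_k(t))f_k(t)$ for $k=0,\ldots,n-1$ and $g_k=0$ for $k\notin\{0,\ldots,n-1\}$. *)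

From Stdlib Require Import Reals.
Open Scope R_scope.

Definition gfun (n : nat) (alpha f : nat -> R -> R) (k : nat) (t : R) : R :=
  if Nat.ltb k n then alpha (S k) t * f (S k) t + (1 - alpha k t) * f k t else 0.

(* backward difference nabla_1 g_k = g_k - g_{k-1}, with g_{-1} = 0 *)
Definition nabla_g (n : nat) (alpha f : nat -> R -> R) (k : nat) (t : R) : R :=
  match k with
  | O => gfun n alpha f O t
  | S j => gfun n alpha f (S j) t - gfun n alpha f j t
  end.

Definition in_A (n : nat) (alpha : nat -> R -> R) : Prop :=
  forall t, 0 <= t <= 1 ->
    alpha O t = 0 /\ alpha n t = 1 /\
    (forall k, (k <= n)%nat -> 0 <= alpha k t <= 1).

Definition pmf_family (n : nat) (f : nat -> R -> R) : Prop :=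
  forall t, 0 <= t <= 1 ->
    (forall k, (k <= n)%nat -> 0 <= f k t) /\ sum_f_R0 (fun k => f k t) n = 1.

Definition entropy (n : nat) (f : nat -> R -> R) (t : R) : R :=
  - sum_f_R0 (fun k => f k t * ln (f k t)) n.

Definition h_k (n : nat) (v : R) (alpha f a1 : nat -> R -> R) (k : nat) (t : R) : R :=
  (1 - alpha k t) * (1 - alpha (S k) t) * f k t
  + 2 * alpha (S k) t * (1 - alpha (S k) t) * f (S k) t
  + alpha (S k) t * alpha (S (S k)) t * f (S (S k)) t
  - / v * f (S k) t * a1 (S k) t.

Definition htilde_k (n : nat) (alpha f : nat -> R -> R) (k : nat) (t : R) : R :=
  (2 * gfun n alpha f k t * gfun n alpha f (S k) t * f (S k) t
   - (gfun n alpha f k t)^2 * f (S (S k)) t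
   - (gfun n alpha f (S k) t)^2 * f k t)
  / ((f (S k) t)^2 - f k t * f (S (S k)) t).

From Stdlib Require Import Reals Lra Lia.
Open Scope R_scope.

(* Write F_k, A_k, A'_k, G_k for f_k, alpha_k, alpha_k', g_k at t*, so that
   f_k' = -v nabla G_k and f_k'' = -v nabla G'_k.  Differentiating twice,
     H'' = - sum_k f_k'' (ln F_k + 1) - v^2 Q,   Q = sum_k (nabla G_k)^2 / F_k.
   Two summations by parts turn the first sum into
     - v^2 sum_m D_m h_m,   D_m = 2 ln F_(m+1) - ln F_m - ln F_(m+2),
   because G'_k = W_k - W_(k+1) for a flux W with W_0 = W_n = 0 and
   W_(m+1) = v h_m.  Hence H'' = v^2 (sum_m D_m h_m - Q).  Termwise,
   D_m h_m <= q_m := G_m^2/F_m + G_(m+1)^2/F_(m+2) - 2 G_m G_(m+1)/F_(m+1),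
   which follows from hypothesis (4), the inequality 2 r ln r <= r^2 - 1
   (r >= 1) and two sum-of-squares identities; finally sum_m q_m <= Q since
   Q - sum_m q_m consists of two nonnegative boundary terms. *)

Lemma derivable_pt_lim_near (f g : R -> R) (x l d : R) :
  0 < d -> (forall t, Rabs (t - x) < d -> f t = g t) ->
  derivable_pt_lim f x l -> derivable_pt_lim g x l.
Proof.
  intros Hd Hfg Hf eps Heps. destruct (Hf eps Heps) as [del Hdel].
  assert (Hm : 0 < Rmin del d) by (apply Rmin_glb_lt; [apply cond_pos | exact Hd]).
  exists (mkposreal _ Hm). simpl. intros h Hh0 Hh.
  pose proof (Rmin_l del d). pose proof (Rmin_r del d).
  rewrite <- !Hfg.
  - apply Hdel; [exact Hh0 | lra].
  - rewrite Rminus_diag, Rabs_R0. exact Hd.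
  - replace (x + h - x) with h by ring. lra.
Qed.

Lemma derivative_unique_near (f g : R -> R) (x l l' d : R) :
  0 < d -> (forall t, Rabs (t - x) < d -> f t = g t) ->
  derivable_pt_lim f x l -> derivable_pt_lim g x l' -> l' = l.
Proof.
  intros Hd Hfg Hf Hg.
  exact (uniqueness_limite g x l' l Hg (derivable_pt_lim_near f g x l d Hd Hfg Hf)).
Qed.

Lemma interior_ball (ts : R) :
  0 < ts < 1 -> exists d, 0 < d /\ forall t, Rabs (t - ts) < d -> 0 < t < 1.
Proof.
  intros Hts. exists (Rmin ts (1 - ts)). split.
  - apply Rmin_glb_lt; lra.
  - intros t Ht. pose proof (Rmin_l ts (1 - ts)). pose proof (Rmin_r ts (1 - ts)).
    apply Rabs_def2 in Ht. lra.
Qed.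

Lemma derivative_constant_on_unit (g : R -> R) (c ts l : R) :
  0 < ts < 1 -> (forall t, 0 <= t <= 1 -> g t = c) -> derivable_pt_lim g ts l -> l = 0.
Proof.
  intros Hts Hc Hg. destruct (interior_ball ts Hts) as [d [Hd Hnear]].
  apply (derivative_unique_near (fun _ => c) g ts 0 l d Hd).
  - intros t Ht. symmetry. apply Hc. pose proof (Hnear t Ht). lra.
  - apply derivable_pt_lim_const.
  - exact Hg.
Qed.

Lemma derivable_pt_lim_sum_f_R0 (u : nat -> R -> R) (du : nat -> R) (x : R) (N : nat) :
  (forall k, (k <= N)%nat -> derivable_pt_lim (u k) x (du k)) ->
  derivable_pt_lim (fun t => sum_f_R0 (fun k => u k t) N) x (sum_f_R0 du N).
Proof.
  induction N as [|N IH]; intros Hu; simpl.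
  - apply Hu. lia.
  - apply (derivable_pt_lim_plus (fun t => sum_f_R0 (fun k => u k t) N) (u (S N))).
    + apply IH. intros k Hk. apply Hu. lia.
    + apply Hu. lia.
Qed.

Lemma derivable_pt_lim_mul_ln (u : R -> R) (x du : R) :
  0 < u x -> derivable_pt_lim u x du ->
  derivable_pt_lim (fun t => u t * ln (u t)) x (du * (ln (u x) + 1)).
Proof.
  intros Hu Hdu.
  pose proof (derivable_pt_lim_comp u ln x du (/ u x) Hdu (derivable_pt_lim_ln _ Hu)) as Hln.
  replace (du * (ln (u x) + 1)) with (du * ln (u x) + u x * (/ u x * du))
    by (field; lra).
  exact (derivable_pt_lim_mult u (comp ln u) x du _ Hdu Hln).
Qed.

Lemma derivable_pt_lim_mul_ln_succ (u w : R -> R) (x du dw : R) :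
  0 < u x -> derivable_pt_lim u x du -> derivable_pt_lim w x dw ->
  derivable_pt_lim (fun t => w t * (ln (u t) + 1)) x
    (dw * (ln (u x) + 1) + w x * (du / u x)).
Proof.
  intros Hu Hdu Hdw.
  pose proof (derivable_pt_lim_comp u ln x du (/ u x) Hdu (derivable_pt_lim_ln _ Hu)) as Hln.
  pose proof (derivable_pt_lim_plus _ _ x _ _ Hln (derivable_pt_lim_const 1 x)) as Hln1.
  replace (dw * (ln (u x) + 1) + w x * (du / u x))
    with (dw * (ln (u x) + 1) + w x * (/ u x * du + 0)) by (field; lra).
  exact (derivable_pt_lim_mult w _ x dw _ Hdw Hln1).
Qed.

(* [2 r ln r <= r^2 - 1] for [r >= 1]: the map [y |-> y^2 - 1 - 2 y ln y]
   vanishes at 1 and has derivative [2 (y - 1 - ln y) >= 0]. *)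
Lemma two_r_ln_le (r : R) : 1 <= r -> 2 * r * ln r <= r ^ 2 - 1.
Proof.
  intros Hr. destruct (Req_dec r 1) as [->|Hne].
  { rewrite ln_1. lra. }
  set (phi := fun y => y * y - 1 - 2 * (y * ln y)).
  set (dphi := fun y => 2 * y - 2 * (ln y + 1)).
  assert (Hd : forall c, 1 <= c <= r -> derivable_pt_lim phi c (dphi c)).
  { intros c Hc.
    pose proof (derivable_pt_lim_id c) as Hid.
    pose proof (derivable_pt_lim_mul_ln id c 1 ltac:(unfold id; lra) Hid) as Hxlnx.
    pose proof (derivable_pt_lim_minus _ _ c _ _
      (derivable_pt_lim_minus _ _ c _ _ (derivable_pt_lim_mult id id c 1 1 Hid Hid)
         (derivable_pt_lim_const 1 c))
      (derivable_pt_lim_scal _ 2 c _ Hxlnx)) as Hphi.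
    unfold dphi; replace (2 * c - 2 * (ln c + 1))
      with (1 * id c + id c * 1 - 0 - 2 * (1 * (ln (id c) + 1))) by (unfold id; ring).
    exact Hphi. }
  destruct (MVT_cor2 phi dphi 1 r ltac:(lra) Hd) as [c [Hmvt Hc]].
  assert (Hln_c : ln c <= c - 1).
  { pose proof (exp_ineq1_le (ln c)) as He. rewrite exp_ln in He by lra. lra. }
  assert (0 <= dphi c * (r - 1)) by (unfold dphi; apply Rmult_le_pos; lra).
  unfold phi in Hmvt. rewrite ln_1 in Hmvt. lra.
Qed.

Lemma log_gap_bound (a b x : R) :
  0 < a -> 0 < b -> 0 < x -> a * b < x ^ 2 ->
  0 < 2 * ln x - ln a - ln b /\
  (2 * ln x - ln a - ln b) * (x * sqrt (a * b)) <= x ^ 2 - a * b.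
Proof.
  intros Ha Hb Hx Hab.
  set (s := sqrt (a * b)).
  assert (Hss : s * s = a * b) by (apply sqrt_sqrt; nra).
  assert (Hs : 0 < s) by (apply sqrt_lt_R0; nra).
  assert (Hr : 1 < x / s).
  { apply (Rmult_lt_reg_r s); [lra|]. unfold Rdiv. rewrite Rmult_assoc, Rinv_l by lra. nra. }
  assert (HD : 2 * ln x - ln a - ln b = 2 * ln (x / s)).
  { assert (Hlns : ln a + ln b = 2 * ln s) by (rewrite <- ln_mult, <- Hss, ln_mult by lra; ring).
    unfold Rdiv. rewrite ln_mult, ln_Rinv by (try apply Rinv_0_lt_compat; lra). lra. }
  rewrite HD. split.
  - assert (Hln : ln 1 < ln (x / s)) by (apply ln_increasing; lra).
    rewrite ln_1 in Hln. lra.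
  - pose proof (two_r_ln_le (x / s) ltac:(lra)) as Hlog.
    apply (Rmult_le_compat_r (s * s)) in Hlog; [|nra].
    replace (((x / s) ^ 2 - 1) * (s * s)) with (x ^ 2 - a * b) in Hlog by (rewrite <- Hss; field; lra).
    replace (2 * (x / s) * ln (x / s) * (s * s)) with (2 * ln (x / s) * (x * s)) in Hlog
      by (field; repeat split; nra).
    exact Hlog.
Qed.

(* The quadratic form [q = g^2/a + g'^2/b - 2 g g'/x] is nonnegative and
   dominates [(2 g g' x - g^2 b - g'^2 a) / (x sqrt(ab))] when [sqrt(ab) < x]
   and [g, g' >= 0]: both differences are sums of squares times positive
   factors, with [u = sqrt a] and [w = sqrt b]. *)
Lemma quadratic_form_bounds (a b x g g' : R) :
  0 < a -> 0 < b -> sqrt (a * b) < x -> 0 <= g -> 0 <= g' ->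
  0 <= g ^ 2 / a + g' ^ 2 / b - 2 * g * g' / x /\
  (2 * g * g' * x - g ^ 2 * b - g' ^ 2 * a) / (x * sqrt (a * b))
    <= g ^ 2 / a + g' ^ 2 / b - 2 * g * g' / x.
Proof.
  intros Ha Hb Hx Hg Hg'.
  rewrite sqrt_mult in * by lra.
  set (u := sqrt a) in *. set (w := sqrt b) in *.
  assert (Hu : 0 < u) by (apply sqrt_lt_R0; lra).
  assert (Hw : 0 < w) by (apply sqrt_lt_R0; lra).
  rewrite <- (sqrt_sqrt a), <- (sqrt_sqrt b) by lra. fold u w.
  assert (Huw : 0 < u * w) by nra.
  assert (Hx0 : 0 < x) by lra.
  split.
  - replace (g ^ 2 / (u * u) + g' ^ 2 / (w * w) - 2 * g * g' / x)
      with ((g * w - g' * u) ^ 2 / (u * w) ^ 2 + 2 * (g * g') * ((x - u * w) / (x * (u * w))))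
      by (field; repeat split; nra).
    assert (0 <= (g * w - g' * u) ^ 2 / (u * w) ^ 2)
      by (apply Rle_mult_inv_pos; [apply pow2_ge_0 | nra]).
    assert (0 <= (x - u * w) / (x * (u * w))) by (apply Rle_mult_inv_pos; nra).
    assert (0 <= g * g') by nra.
    nra.
  - enough (0 <= g ^ 2 / (u * u) + g' ^ 2 / (w * w) - 2 * g * g' / x
                 - (2 * g * g' * x - g ^ 2 * (w * w) - g' ^ 2 * (u * u)) / (x * (u * w)))
      by lra.
    replace (g ^ 2 / (u * u) + g' ^ 2 / (w * w) - 2 * g * g' / x
             - (2 * g * g' * x - g ^ 2 * (w * w) - g' ^ 2 * (u * u)) / (x * (u * w)))
      with ((x + u * w) * (g * w - g' * u) ^ 2 / (x * (u * w) ^ 2)) by (field; repeat split; nra).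
    apply Rle_mult_inv_pos.
    + apply Rmult_le_pos; [lra | apply pow2_ge_0].
    + apply Rmult_lt_0_compat; [lra | apply pow_lt; lra].
Qed.

Lemma log_gap_mul_le (a b x g g' h : R) :
  0 < a -> 0 < b -> 0 < x -> x ^ 2 - a * b > 0 -> 0 <= g -> 0 <= g' ->
  h <= (2 * g * g' * x - g ^ 2 * b - g' ^ 2 * a) / (x ^ 2 - a * b) ->
  (2 * ln x - ln a - ln b) * h <= g ^ 2 / a + g' ^ 2 / b - 2 * g * g' / x.
Proof.
  intros Ha Hb Hx Hab Hg Hg' Hh.
  set (D := 2 * ln x - ln a - ln b).
  set (s := sqrt (a * b)).
  set (q := g ^ 2 / a + g' ^ 2 / b - 2 * g * g' / x).
  set (N := 2 * g * g' * x - g ^ 2 * b - g' ^ 2 * a).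
  destruct (log_gap_bound a b x Ha Hb Hx ltac:(lra)) as [HD HDs]. fold D s in HD, HDs.
  assert (Hss : s * s = a * b) by (apply sqrt_sqrt; nra).
  assert (Hs : 0 < s) by (apply sqrt_lt_R0; nra).
  assert (Hsx : s < x) by nra.
  destruct (quadratic_form_bounds a b x g g' Ha Hb Hsx Hg Hg') as [Hq0 Hq]. fold q N s in Hq0, Hq.
  (* [D * h <= lam * (N / (x s))] with [lam = D x s / (x^2 - ab)] in [0, 1] *)
  set (lam := D * (x * s) / (x ^ 2 - a * b)).
  assert (Hlam0 : 0 <= lam).
  { apply Rle_mult_inv_pos; [|lra]. apply Rmult_le_pos; [|apply Rmult_le_pos]; lra. }
  assert (Hlam1 : lam <= 1).
  { unfold lam. apply (Rmult_le_reg_r (x ^ 2 - a * b)); [lra|].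
    unfold Rdiv. rewrite Rmult_assoc, Rinv_l by lra. lra. }
  assert (Hh' : D * h <= lam * (N / (x * s))).
  { replace (lam * (N / (x * s))) with (D * (N / (x ^ 2 - a * b))) by (unfold lam; field; repeat split; lra).
    apply Rmult_le_compat_l; [lra | exact Hh]. }
  (* [lam * (N / (x s)) <= lam * q <= q] *)
  nra.
Qed.

Definition nabla (X : nat -> R) (k : nat) : R :=
  match k with O => X O | S j => X (S j) - X j end.

Lemma sum_nabla_by_parts (X Y : nat -> R) (N : nat) :
  sum_f_R0 (fun k => nabla X k * Y k) (S N)
  = X (S N) * Y (S N) + sum_f_R0 (fun k => X k * (Y k - Y (S k))) N.
Proof.
  induction N as [|N IH]; simpl in *.
  - ring.
  - rewrite IH. ring.
Qed.

Definition qform (G F : nat -> R) (m : nat) : R :=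
  G m ^ 2 / F m + G (S m) ^ 2 / F (S (S m)) - 2 * G m * G (S m) / F (S m).

Lemma sum_nabla_sq_split (G F : nat -> R) (M : nat) :
  sum_f_R0 (fun k => nabla G k ^ 2 / F k) (S M)
  = sum_f_R0 (qform G F) M + G O ^ 2 / F 1%nat
    + G (S M) ^ 2 / F (S M) - G (S M) ^ 2 / F (S (S M)).
Proof.
  induction M as [|M IH].
  - simpl. unfold qform, Rdiv. ring.
  - change (sum_f_R0 (fun k => nabla G k ^ 2 / F k) (S M) + nabla G (S (S M)) ^ 2 / F (S (S M))
            = sum_f_R0 (qform G F) M + qform G F (S M) + G O ^ 2 / F 1%nat
              + G (S (S M)) ^ 2 / F (S (S M)) - G (S (S M)) ^ 2 / F (S (S (S M)))).
    rewrite IH. unfold qform, nabla, Rdiv. ring.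
Qed.

(* The discrete statement at a fixed time: [F, A, Ad, G] are the values of
   [f_k, alpha_k, alpha_k', g_k], and [Fd, Gd, Fdd] those of [f_k', g_k',
   f_k''], linked by the evolution equation and the product rule. *)
Section EntropyCurvature.

Variables (n : nat) (v : R) (F A Ad G Fd Gd Fdd : nat -> R).

Hypothesis Hv : v <> 0.
Hypothesis HF : forall k, (k <= n)%nat -> 0 < F k.
Hypothesis HA : forall k, (k <= n)%nat -> 0 <= A k <= 1.
Hypothesis HA0 : A O = 0.
Hypothesis HAn : A n = 1.
Hypothesis HAd0 : Ad O = 0.
Hypothesis HAdn : Ad n = 0.
Hypothesis HG : forall k, (k < n)%nat -> G k = A (S k) * F (S k) + (1 - A k) * F k.
Hypothesis HGn : G n = 0.
Hypothesis HFd : forall k, (k <= n)%nat -> Fd k = - v * nabla G k.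
Hypothesis HGd : forall k, (k < n)%nat ->
  Gd k = Ad (S k) * F (S k) + A (S k) * Fd (S k) - Ad k * F k + (1 - A k) * Fd k.
Hypothesis HGdn : Gd n = 0.
Hypothesis HFdd : forall k, (k <= n)%nat -> Fdd k = - v * nabla Gd k.

(* The flux whose differences are [G'], see [Gd_flux]. *)
Definition flux (j : nat) : R := v * (G j - (1 - A j) * nabla G j) - Ad j * F j.

Lemma Gd_flux k : (k < n)%nat -> Gd k = flux k - flux (S k).
Proof.
  intros Hk. rewrite (HGd k Hk), (HFd k), (HFd (S k)) by lia.
  unfold flux. destruct k; simpl; ring.
Qed.

(* The flux vanishes at both ends because [alpha_0 = 0], [alpha_n = 1] are constant. *)
Lemma flux_0 : flux O = 0.
Proof. unfold flux. rewrite HA0, HAd0. simpl. ring. Qed.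

Lemma flux_n : flux n = 0.
Proof. unfold flux. rewrite HAn, HAdn, HGn. ring. Qed.

(* [g_k] is a combination of [f_k, f_(k+1)] with coefficients in [0, 1]. *)
Lemma G_nonneg k : (k < n)%nat -> 0 <= G k.
Proof.
  intros Hk. rewrite (HG k Hk).
  pose proof (HF k ltac:(lia)). pose proof (HF (S k) ltac:(lia)).
  pose proof (HA k ltac:(lia)). pose proof (HA (S k) ltac:(lia)). nra.
Qed.

(* The sum [Q]; the squared first derivatives contribute [v^2 Q] to [-H'']. *)
Definition fisher : R := sum_f_R0 (fun k => nabla G k ^ 2 / F k) n.

Lemma fisher_term :
  sum_f_R0 (fun k => Fd k * (Fd k / F k)) n = v ^ 2 * fisher.
Proof.
  unfold fisher. rewrite scal_sum. apply sum_eq. intros k Hk.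
  rewrite (HFd k Hk). pose proof (HF k Hk). field. lra.
Qed.

(* First summation by parts, using [G'_n = 0]. *)
Lemma curvature_flux N : n = S N ->
  sum_f_R0 (fun k => Fdd k * (ln (F k) + 1)) n
  = - v * sum_f_R0 (fun k => Gd k * (ln (F k) - ln (F (S k)))) N.
Proof.
  intros ->.
  transitivity (- v * sum_f_R0 (fun k => nabla Gd k * (ln (F k) + 1)) (S N)).
  - rewrite scal_sum. apply sum_eq. intros k Hk. rewrite (HFdd k Hk). ring.
  - rewrite sum_nabla_by_parts, HGdn, Rmult_0_l, Rplus_0_l. f_equal.
    apply sum_eq. intros k _. ring.
Qed.

(* [hseq m] is [h_m] of hypothesis (4) and [log_gap m] is [D_m]. *)
Definition hseq (m : nat) : R :=
  (1 - A m) * (1 - A (S m)) * F m + 2 * A (S m) * (1 - A (S m)) * F (S m)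
  + A (S m) * A (S (S m)) * F (S (S m)) - / v * F (S m) * Ad (S m).

Definition log_gap (m : nat) : R := 2 * ln (F (S m)) - ln (F m) - ln (F (S (S m))).

Lemma flux_hseq m : (S (S m) <= n)%nat -> flux (S m) = v * hseq m.
Proof.
  intros Hm. unfold flux, hseq. simpl nabla.
  rewrite (HG m), (HG (S m)) by lia. field. exact Hv.
Qed.

(* For [n = 1] the curvature term vanishes, for [n >= 2] a second summation
   by parts expresses it through the [D_m h_m]. *)
Lemma curvature_term_1 : n = 1%nat ->
  sum_f_R0 (fun k => Fdd k * (ln (F k) + 1)) n = 0.
Proof.
  intros Hn1. rewrite (curvature_flux O Hn1). simpl.
  rewrite (Gd_flux O) by lia. rewrite flux_0, <- Hn1, flux_n. ring.
Qed.

Lemma curvature_term M : n = S (S M) ->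
  sum_f_R0 (fun k => Fdd k * (ln (F k) + 1)) n
  = - v ^ 2 * sum_f_R0 (fun m => log_gap m * hseq m) M.
Proof.
  intros Hn2. rewrite (curvature_flux (S M) Hn2).
  transitivity (v * sum_f_R0 (fun k => nabla (fun j => flux (S j)) k
                                      * (ln (F k) - ln (F (S k)))) (S M)).
  - rewrite !scal_sum. apply sum_eq. intros k Hk.
    rewrite (Gd_flux k) by lia. destruct k; simpl; rewrite ?flux_0; ring.
  - rewrite sum_nabla_by_parts, <- Hn2, flux_n, Rmult_0_l, Rplus_0_l, !scal_sum.
    apply sum_eq. intros m Hm. rewrite (flux_hseq m) by lia. unfold log_gap. ring.
Qed.

(* [Q] exceeds [sum_m q_m] by the boundary terms [G_0^2/F_1 + G_(n-1)^2/F_(n-1)]. *)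
Lemma qform_sum_le_fisher M : n = S (S M) ->
  sum_f_R0 (qform G F) M <= fisher.
Proof.
  intros Hn2. unfold fisher. rewrite Hn2.
  change (sum_f_R0 (qform G F) M
          <= sum_f_R0 (fun k => nabla G k ^ 2 / F k) (S M) + nabla G (S (S M)) ^ 2 / F (S (S M))).
  rewrite sum_nabla_sq_split. simpl nabla. rewrite <- Hn2, HGn.
  assert (0 <= G O ^ 2 / F 1%nat) by (apply Rle_mult_inv_pos; [apply pow2_ge_0 | apply HF; lia]).
  assert (0 <= G (S M) ^ 2 / F (S M)) by (apply Rle_mult_inv_pos; [apply pow2_ge_0 | apply HF; lia]).
  replace ((0 - G (S M)) ^ 2) with (G (S M) ^ 2) by ring.
  rewrite Hn2. lra.
Qed.

(* [Q >= 0], needed when [n = 1]. *)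
Lemma fisher_nonneg : 0 <= fisher.
Proof.
  unfold fisher. rewrite <- (Rmult_0_l (INR (S n))), <- sum_cte.
  apply sum_Rle. intros k Hk.
  apply Rle_mult_inv_pos; [apply pow2_ge_0 | exact (HF k Hk)].
Qed.

Hypothesis Hlogconc : forall k, (k + 2 <= n)%nat ->
  F (S k) ^ 2 - F k * F (S (S k)) > 0 /\
  hseq k <= (2 * G k * G (S k) * F (S k) - G k ^ 2 * F (S (S k)) - G (S k) ^ 2 * F k)
            / (F (S k) ^ 2 - F k * F (S (S k))).

Lemma entropy_curvature_nonpos : (1 <= n)%nat ->
  - sum_f_R0 (fun k => Fdd k * (ln (F k) + 1) + Fd k * (Fd k / F k)) n <= 0.
Proof.
  intros Hn.
  rewrite plus_sum, fisher_term.
  pose proof fisher_nonneg as Hfisher.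
  pose proof (pow2_ge_0 v) as Hv2.
  assert (Hcases : n = 1%nat \/ exists M, n = S (S M)).
  { destruct n as [|[|M]]; [lia | left | right; exists M]; reflexivity. }
  destruct Hcases as [Hn1 | [M Hn2]].
  - rewrite (curvature_term_1 Hn1). nra.
  - rewrite (curvature_term M Hn2).
    assert (Hgap : sum_f_R0 (fun m => log_gap m * hseq m) M <= sum_f_R0 (qform G F) M).
    { apply sum_Rle. intros m Hm. destruct (Hlogconc m ltac:(lia)) as [Hstrict Hh].
      apply log_gap_mul_le; try apply HF; try apply G_nonneg; try lia; assumption. }
    pose proof (qform_sum_le_fisher M Hn2) as Hboundary.
    nra.
Qed.

End EntropyCurvature.

Definition entropy_rate (n : nat) (f f1 : nat -> R -> R) (t : R) : R :=
  - sum_f_R0 (fun k => f1 k t * (ln (f k t) + 1)) n.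

Lemma entropy_first_derivative (n : nat) (f f1 : nat -> R -> R) (t : R) :
  (forall k, (k <= n)%nat -> 0 < f k t) ->
  (forall k, (k <= n)%nat -> derivable_pt_lim (f k) t (f1 k t)) ->
  derivable_pt_lim (entropy n f) t (entropy_rate n f f1 t).
Proof.
  intros Hpos Hf1. apply derivable_pt_lim_opp.
  apply (derivable_pt_lim_sum_f_R0 (fun k t => f k t * ln (f k t))).
  intros k Hk. apply derivable_pt_lim_mul_ln; auto.
Qed.

Lemma entropy_second_derivative (n : nat) (f f1 f2 : nat -> R -> R) (t : R) :
  (forall k, (k <= n)%nat -> 0 < f k t) ->
  (forall k, (k <= n)%nat -> derivable_pt_lim (f k) t (f1 k t)) ->
  (forall k, (k <= n)%nat -> derivable_pt_lim (f1 k) t (f2 k t)) ->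
  derivable_pt_lim (entropy_rate n f f1) t
    (- sum_f_R0 (fun k => f2 k t * (ln (f k t) + 1) + f1 k t * (f1 k t / f k t)) n).
Proof.
  intros Hpos Hf1 Hf2. apply derivable_pt_lim_opp.
  apply (derivable_pt_lim_sum_f_R0 (fun k t => f1 k t * (ln (f k t) + 1))).
  intros k Hk. apply derivable_pt_lim_mul_ln_succ; auto.
Qed.

Definition gfun_dot (n : nat) (alpha a1 f f1 : nat -> R -> R) (k : nat) (t : R) : R :=
  if Nat.ltb k n
  then a1 (S k) t * f (S k) t + alpha (S k) t * f1 (S k) t - a1 k t * f k t + (1 - alpha k t) * f1 k t
  else 0.

Lemma gfun_derivative (n : nat) (alpha a1 f f1 : nat -> R -> R) (t : R) (k : nat) :
  (forall j, (j <= n)%nat -> derivable_pt_lim (f j) t (f1 j t)) ->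
  (forall j, (j <= n)%nat -> derivable_pt_lim (alpha j) t (a1 j t)) ->
  derivable_pt_lim (gfun n alpha f k) t (gfun_dot n alpha a1 f f1 k t).
Proof.
  intros Hf1 Ha1. unfold gfun, gfun_dot.
  destruct (Nat.ltb k n) eqn:Hk.
  - apply Nat.ltb_lt in Hk.
    replace (a1 (S k) t * f (S k) t + alpha (S k) t * f1 (S k) t - a1 k t * f k t
             + (1 - alpha k t) * f1 k t)
      with (a1 (S k) t * f (S k) t + alpha (S k) t * f1 (S k) t
            + ((0 - a1 k t) * f k t + (1 - alpha k t) * f1 k t)) by ring.
    assert (Hone : derivable_pt_lim (fun s => 1 - alpha k s) t (0 - a1 k t)).
    { apply (derivable_pt_lim_minus (fun _ => 1) (alpha k)).
      - apply derivable_pt_lim_const.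
      - apply Ha1. lia. }
    apply (derivable_pt_lim_plus (fun s => alpha (S k) s * f (S k) s)
                                 (fun s => (1 - alpha k s) * f k s)).
    + apply derivable_pt_lim_mult; [apply Ha1 | apply Hf1]; lia.
    + apply (derivable_pt_lim_mult (fun s => 1 - alpha k s) (f k)); [exact Hone | apply Hf1; lia].
  - apply derivable_pt_lim_const.
Qed.

Lemma nabla_g_nabla (n : nat) (alpha f : nat -> R -> R) (k : nat) (t : R) :
  nabla_g n alpha f k t = nabla (fun j => gfun n alpha f j t) k.
Proof. destruct k; reflexivity. Qed.

Lemma nabla_g_derivative (n : nat) (alpha a1 f f1 : nat -> R -> R) (t : R) (k : nat) :
  (forall j, (j <= n)%nat -> derivable_pt_lim (f j) t (f1 j t)) ->
  (forall j, (j <= n)%nat -> derivable_pt_lim (alpha j) t (a1 j t)) ->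
  derivable_pt_lim (nabla_g n alpha f k) t (nabla (fun j => gfun_dot n alpha a1 f f1 j t) k).
Proof.
  intros Hf1 Ha1. destruct k as [|j]; simpl.
  - exact (gfun_derivative n alpha a1 f f1 t O Hf1 Ha1).
  - apply derivable_pt_lim_minus; apply gfun_derivative; assumption.
Qed.

Lemma evolution_second_derivative (n k : nat) (v : R) (f alpha f1 f2 a1 : nat -> R -> R)
    (ts : R) :
  0 < ts < 1 ->
  (forall j, (j <= n)%nat -> derivable_pt_lim (f j) ts (f1 j ts)) ->
  (forall j, (j <= n)%nat -> derivable_pt_lim (alpha j) ts (a1 j ts)) ->
  (forall t, 0 < t < 1 -> f1 k t = - v * nabla_g n alpha f k t) ->
  derivable_pt_lim (f1 k) ts (f2 k ts) ->
  f2 k ts = - v * nabla (fun j => gfun_dot n alpha a1 f f1 j ts) k.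
Proof.
  intros Hts Hf1 Ha1 Hode Hf2.
  destruct (interior_ball ts Hts) as [d [Hd Hnear]].
  apply (derivative_unique_near (fun t => - v * nabla_g n alpha f k t) (f1 k) ts _ _ d Hd).
  - intros t Ht. symmetry. apply Hode. exact (Hnear t Ht).
  - apply derivable_pt_lim_scal. apply nabla_g_derivative; assumption.
  - exact Hf2.
Qed.

Theorem theorem4p4
  (n : nat) (Hn : (1 <= n)%nat) (v : R) (Hv : v <> 0)
  (f alpha : nat -> R -> R)
  (f1 f2 a1 : nat -> R -> R)   (* first/second derivatives of f, derivative of alpha *)
  (HA : in_A n alpha)
  (Hpmf : pmf_family n f)
  (Hpos : forall k t, (k <= n)%nat -> 0 <= t <= 1 -> 0 < f k t)
  (Hf1 : forall k t, (k <= n)%nat -> 0 < t < 1 -> derivable_pt_lim (f k) t (f1 k t))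
  (Hf2 : forall k t, (k <= n)%nat -> 0 < t < 1 -> derivable_pt_lim (f1 k) t (f2 k t))
  (Hf2c : forall k t, (k <= n)%nat -> 0 < t < 1 -> continuity_pt (f2 k) t)
  (Ha1 : forall k t, (k <= n)%nat -> 0 < t < 1 -> derivable_pt_lim (alpha k) t (a1 k t))
  (Ha1c : forall k t, (k <= n)%nat -> 0 < t < 1 -> continuity_pt (a1 k) t)
  (Hode : forall k t, (k <= n)%nat -> 0 < t < 1 -> f1 k t = - v * nabla_g n alpha f k t)
  (ts : R) (Hts : 0 < ts < 1)
  (H1c : forall k, (k < n)%nat -> alpha k ts <= alpha (S k) ts)
  (H3c : forall k, (k + 2 <= n)%nat ->
     alpha (S k) ts * (1 - alpha (S k) ts) * (f (S k) ts)^2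
     - alpha (S (S k)) ts * (1 - alpha k ts) * f k ts * f (S (S k)) ts >= 0)
  (H4c : forall k, (k + 2 <= n)%nat ->
     (f (S k) ts)^2 - f k ts * f (S (S k)) ts > 0 /\
     h_k n v alpha f a1 k ts <= htilde_k n alpha f k ts) :
  exists (H1 : R -> R) (l : R),
    (forall t, 0 < t < 1 -> derivable_pt_lim (entropy n f) t (H1 t)) /\
    derivable_pt_lim H1 ts l /\ l <= 0.
Proof.
  assert (Hts01 : 0 <= ts <= 1) by lra.
  destruct (HA ts Hts01) as [HA0 [HAn HAr]].
  exists (entropy_rate n f f1),
    (- sum_f_R0 (fun k => f2 k ts * (ln (f k ts) + 1) + f1 k ts * (f1 k ts / f k ts)) n).
  split; [|split].
  - intros t Ht. apply entropy_first_derivative; intros k Hk;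
      [apply Hpos | apply Hf1]; auto; lra.
  - apply entropy_second_derivative; intros k Hk; [apply Hpos | apply Hf1 | apply Hf2]; auto.
  -
    apply (entropy_curvature_nonpos n v (fun k => f k ts) (fun k => alpha k ts) (fun k => a1 k ts)
             (fun k => gfun n alpha f k ts) (fun k => f1 k ts)
             (fun k => gfun_dot n alpha a1 f f1 k ts) (fun k => f2 k ts)); try assumption.
    + intros k Hk. apply Hpos; assumption.
    + apply (derivative_constant_on_unit (alpha O) 0 ts); [exact Hts | apply HA | apply Ha1; auto; lia].
    + apply (derivative_constant_on_unit (alpha n) 1 ts); [exact Hts | apply HA | apply Ha1; auto].
    + intros k Hk. unfold gfun. rewrite (proj2 (Nat.ltb_lt k n) Hk). reflexivity.
    + unfold gfun. rewrite Nat.ltb_irrefl. reflexivity.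
    + intros k Hk. rewrite (Hode k ts Hk Hts), nabla_g_nabla. reflexivity.
    + intros k Hk. unfold gfun_dot. rewrite (proj2 (Nat.ltb_lt k n) Hk). reflexivity.
    + unfold gfun_dot. rewrite Nat.ltb_irrefl. reflexivity.
    + intros k Hk. apply (evolution_second_derivative n k v f alpha f1 f2 a1 ts Hts); auto.
Qed.
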